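(* Let $V$ be an $n$-dimensional real vector space and $\mu\in(V^* )^{\wedge p}$ a nonzero exterior $p$-form of rank $r$, with kernel $Z$ and divisibility space $D$, so that $\dim Z=n-r$; set $s=n-\dim D$ (one has $s\le r$). Then: (a) $s\neq p-1$ and $s\le p$, with $s=p$ if and only if $\mu$ is decomposable; (b) for any basis $\xi^1,\dots,\xi^n$ of $V^*$ such that $\xi^1,\dots,\xi^s$ is a basis of the polar space $D'$ of $D$, one has $\mu=\xi^1\wedge\dots\wedge\xi^s\wedge\zeta$, where the $(p-s)$-form $\zeta$ is indivisible and is a linear combination of $(p-s)$-fold exterior products of $1$-forms from $\{\xi^{s+1},\dots,\xi^n\}$; (c) if $\mu=\xi^1\wedge\dots\wedge\xi^s\wedge\zeta$ for some basis $\xi^1,\dots,\xi^s$ of $D'$ and some exterior $(p-s)$-form $\zeta$, then the restriction of any such $\zeta$ to $D$ is uniquely determined by $\mu$ up to a nonzero scalar factor; (d) this restriction of $\zeta$ to $D$ is indivisible in $D$.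
   Context: The rank of $\mu$ is the minimum dimension of a vector space $W$ such that $\mu$ is the pullback of an exterior $p$-form on $W$ under some linear map $V\to W$. The kernel of $\mu$ is $Z=\{v\in V:\mu(v,\cdot,\dots,\cdot)=0\}$. The divisibility space $D$ is the common kernel of all $\xi\in V^*$ with $\xi\wedge\mu=0$; $D'=\{\xi\in V^*:\xi\wedge\mu=0\}$ is its polar space. A $p$-form is decomposable if it is an exterior product of $p$ $1$-forms. A form is indivisible (in a space) if its divisibility space is the whole space, i.e. $\xi\wedge\mu\neq0$ for all nonzero $1$-forms $\xi$; a nonzero $0$-form is indivisible. *)

From HB Require Import structures.
From mathcomp Require Import all_boot all_order all_algebra.
From mathcomp Require Import reals.
Set Implicit Arguments. Unset Strict Implicit. Unset Printing Implicit Defensive.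
Import Order.TTheory GRing.Theory Num.Theory.
Local Open Scope ring_scope.

(* V = R^n realised as row vectors 'rV[R]_n; V^* realised as row vectors too,
   with the pairing [ev xi v]. *)
Section Forms.
Variables (R : realType) (n : nat).

Definition ev (xi v : 'rV[R]_n) : R := \sum_(i < n) xi 0 i * v 0 i.

(* A (possibly multi-degree) eform: a function of finite sequences of vectors.
   A p-eform is one vanishing on sequences of length <> p, multilinear and
   alternating on sequences of length p. *)
Definition eform := seq 'rV[R]_n -> R.

Definition zeroF : eform := fun _ => 0.

Definition form1 : eform := fun vs => if vs is [::] then 1 else 0.

Definition is_pform (p : nat) (mu : eform) : Prop :=
  [/\ (forall vs, size vs != p -> mu vs = 0),
      (forall vs (i : nat) (a : R) (u w : 'rV[R]_n), (i < size vs)%N ->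
          mu (set_nth 0 vs i (a *: u + w)) =
          a * mu (set_nth 0 vs i u) + mu (set_nth 0 vs i w))
    & (forall vs (i j : nat), (i < j)%N -> (j < size vs)%N ->
          nth 0 vs i = nth 0 vs j -> mu vs = 0)].

Definition wedge1 (xi : 'rV[R]_n) (mu : eform) : eform :=
  fun vs => \sum_(i < size vs)
     (-1) ^+ i * ev xi (nth 0 vs i) * mu (take i vs ++ drop i.+1 vs).

Definition wedges (xs : seq 'rV[R]_n) (zeta : eform) : eform :=
  foldr wedge1 zeta xs.

(* mu is decomposable: a product of p one-forms (a scalar is allowed, so that
   every nonzero 0-eform is decomposable) *)
Definition decomposable (p : nat) (mu : eform) : Prop :=
  exists (c : R) (xs : seq 'rV[R]_n),
    size xs = p /\ mu = (fun vs => c * wedges xs form1 vs).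

Definition indivisible (mu : eform) : Prop :=
  forall xi : 'rV[R]_n, xi != 0 -> wedge1 xi mu <> zeroF.

Definition inD (mu : eform) (v : 'rV[R]_n) : Prop :=
  forall xi : 'rV[R]_n, wedge1 xi mu = zeroF -> ev xi v = 0.

Definition polar_basis (mu : eform) (k : nat) (Y : 'M[R]_(k, n)) : Prop :=
  row_free Y /\ (forall xi : 'rV[R]_n, wedge1 xi mu = zeroF <-> (xi <= Y)%MS).

Definition rows (k : nat) (Y : 'M[R]_(k, n)) : seq 'rV[R]_n :=
  [seq row i Y | i <- enum 'I_k].

End Forms.
Arguments zeroF {R n}.
Arguments form1 {R n}.

From HB Require Import structures.
From mathcomp Require Import all_boot all_order all_algebra.
From mathcomp Require Import reals.
From mathcomp Require Import ring lra zify.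
From Stdlib Require Import Classical FunctionalExtensionality.
Set Implicit Arguments.
Unset Strict Implicit.
Unset Printing Implicit Defensive.

Import Order.TTheory GRing.Theory Num.Theory.
Local Open Scope ring_scope.

(* The covectors [xi] with [xi /\ mu = 0] form the polar [D'] of the
   divisibility space [D].  Take a basis [y_1 .. y_s] of [D'] and vectors
   [w_1 .. w_s] with [y_i(w_j) = delta_ij].  Dividing by the [y_i] one at a
   time gives [mu = y_1 /\ .. /\ y_s /\ zeta] with [zeta = mu(w_1, .., w_s, -)],
   hence [s <= p], and [mu(w_1, .., w_s, vs) = zeta(vs)] whenever [vs] lies in
   [D].  An alternating form [g] with [y_i /\ g = 0] for all [i] is determined by
   the values [g(w_1, .., w_s, vs)] with [vs] in [D]; applied to [mu] and to
   [xi /\ mu] this yields (c) and (d).  If [zeta] were a 1-form it would be a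
   covector of [D'] vanishing on all [w_j], hence zero, so [s <> p - 1]; and a
   nonzero product of [p] covectors is annihilated by their [p]-dimensional
   span, so [s = p] exactly when [mu] is decomposable.  For (b), [zeta] is
   expanded in the given basis by splitting off one basis covector at a time. *)

Section Rowspace.
Variables (K : fieldType) (n : nat).

Lemma subspace_rowspace (P : 'rV[K]_n -> Prop) : P 0 ->
  (forall a x y, P x -> P y -> P (a *: x + y)) ->
  exists A : 'M[K]_n, forall xi, P xi <-> (xi <= A)%MS.
Proof.
move=> P0 PD.
suff grow k (A : 'M[K]_n) : (forall xi, (xi <= A)%MS -> P xi) ->
    (n - \rank A <= k)%N -> exists B : 'M[K]_n, forall xi, P xi <-> (xi <= B)%MS.
  by apply: (grow n 0) => [xi|]; rewrite ?leq_subr // submx0 => /eqP ->.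
have stop B : (forall xi, (xi <= B)%MS -> P xi) ->
    ~ (exists xi, P xi /\ ~~ (xi <= B)%MS) -> forall xi, P xi <-> (xi <= B)%MS.
  move=> sBP nex xi; split=> [Pxi|]; last exact: sBP.
  by apply/idPn => nxi; apply: nex; exists xi.
elim: k A => [|k IH] A sAP rkA;
  have [[xi [Pxi nxi]]|nex] := classic (exists xi, P xi /\ ~~ (xi <= A)%MS);
  try by exists A; apply: stop.
  by move: nxi; rewrite submx_full // /row_full eqn_leq rank_leq_col -subn_eq0 -leqn0.
have ltA : (A < xi + A)%MS.
  by rewrite ltmxE addsmxSr; apply: contra nxi; apply: submx_trans (addsmxSl _ _).
apply: (IH (xi + A)%MS) => [y /sub_addsmxP [u ->]|].
  rewrite [u.1]mx11_scalar mul_scalar_mx.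
  exact: PD _ _ _ Pxi (sAP _ (submxMl _ _)).
by have := rank_ltmx ltA; have := rank_leq_col (xi + A)%MS; lia.
Qed.

End Rowspace.

Lemma enum_ord_sorted m (A : {set 'I_m}) : sorted (relpre (@nat_of_ord m) ltn) (enum A).
Proof.
have -> : enum A = filter (mem A) (enum 'I_m) by rewrite enumT.
apply: sorted_filter; first by move=> a b c /= ab bc; apply: ltn_trans ab bc.
by have := iota_ltn_sorted 0 m; rewrite -val_enum_ord sorted_map.
Qed.

Lemma enum_setU1_min m (j0 : 'I_m) (S : {set 'I_m}) :
  (forall i, i \in S -> (j0 < i)%N) -> enum (j0 |: S) = j0 :: enum S.
Proof.
have ltn_tr : transitive (relpre (@nat_of_ord m) ltn).
  by move=> a b c /= ab bc; apply: ltn_trans ab bc.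
move=> j0S; apply: (irr_sorted_eq ltn_tr) => [a|||i]; rewrite /= ?ltnn //.
- exact: enum_ord_sorted.
- by rewrite path_sortedE // enum_ord_sorted andbT; apply/allP => i; rewrite mem_enum; apply: j0S.
- by rewrite mem_enum in_setU1 inE mem_enum.
Qed.

Section ExteriorForms.
Variables (R : realType) (n : nat).
Local Notation V := 'rV[R]_n.
Local Notation F := (eform R n).

Lemma evPl a (x y v : V) : ev (a *: x + y) v = a * ev x v + ev y v.
Proof.
rewrite /ev mulr_sumr -big_split; apply: eq_bigr => i _.
by rewrite !mxE mulrDl mulrA.
Qed.

Lemma evPr a (x u w : V) : ev x (a *: u + w) = a * ev x u + ev x w.
Proof.
rewrite /ev mulr_sumr -big_split; apply: eq_bigr => i _.
by rewrite !mxE mulrDr mulrCA.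
Qed.

Lemma ev0l (v : V) : ev 0 v = 0.
Proof. by rewrite /ev big1 // => i _; rewrite mxE mul0r. Qed.

Lemma ev0r (x : V) : ev x 0 = 0.
Proof. by rewrite /ev big1 // => i _; rewrite mxE mulr0. Qed.

Lemma ev_suml (I : finType) (P : pred I) (c : I -> R) (x : I -> V) v :
  ev (\sum_(i | P i) c i *: x i) v = \sum_(i | P i) c i * ev (x i) v.
Proof.
apply: (big_rec2 (fun a b => ev a v = b)); first exact: ev0l.
by move=> i a b _ <-; rewrite evPl.
Qed.

Lemma ev_sumr (I : finType) (P : pred I) (c : I -> R) (x : I -> V) v :
  ev v (\sum_(i | P i) c i *: x i) = \sum_(i | P i) c i * ev v (x i).
Proof.
apply: (big_rec2 (fun a b => ev v a = b)); first exact: ev0r.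
by move=> i a b _ <-; rewrite evPr.
Qed.

Lemma ev_row_mul k (Y : 'M[R]_(k, n)) (B : 'M[R]_(n, k)) i j :
  ev (row i Y) (row j B^T) = (Y *m B) i j.
Proof. by rewrite /ev !mxE; apply: eq_bigr => l _; rewrite !mxE. Qed.

Lemma mul_tr_ev k (v : V) (A : 'M[R]_(k, n)) j : (v *m A^T) 0 j = ev (row j A) v.
Proof. by rewrite /ev !mxE; apply: eq_bigr => l _; rewrite !mxE mulrC. Qed.

Lemma ev_submx_eq0 k (xi v : V) (A : 'M[R]_(k, n)) :
  (forall j, ev (row j A) v = 0) -> (xi <= A)%MS -> ev xi v = 0.
Proof.
move=> Av0 /submxP [D ->]; rewrite mulmx_sum_row ev_suml big1 // => j _.
by rewrite Av0 mulr0.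
Qed.

(** * Contraction and multiplication by a covector *)

Definition contr (v : V) (f : F) : F := fun vs => f (v :: vs).

Definition contrs (ws : seq V) (f : F) : F := fun vs => f (ws ++ vs).

Lemma wedge1_nil x (f : F) : wedge1 x f [::] = 0.
Proof. by rewrite /wedge1 big_ord0. Qed.

Lemma wedge1_cons x (f : F) v vs :
  wedge1 x f (v :: vs) = ev x v * f vs - wedge1 x (contr v f) vs.
Proof.
rewrite /wedge1 /= big_ord_recl /= expr0 mul1r drop0; congr (_ + _).
rewrite -sumrN; apply: eq_bigr => i _; rewrite /= exprS /contr.
by rewrite mulN1r !mulNr.
Qed.

Lemma contr_wedge1 x v (f : F) :
  contr v (wedge1 x f) = fun ws => ev x v * f ws + (-1) * wedge1 x (contr v f) ws.
Proof.
by apply: functional_extensionality => ws; rewrite /contr wedge1_cons mulN1r.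
Qed.

Lemma wedge1_linr x a b (f g : F) vs :
  wedge1 x (fun ws => a * f ws + b * g ws) vs =
  a * wedge1 x f vs + b * wedge1 x g vs.
Proof.
by rewrite /wedge1 !mulr_sumr -big_split /=; apply: eq_bigr => i _ /=; ring.
Qed.

Lemma wedge1_linl a (x y : V) (f : F) vs :
  wedge1 (a *: x + y) f vs = a * wedge1 x f vs + wedge1 y f vs.
Proof.
rewrite /wedge1 mulr_sumr -big_split /=; apply: eq_bigr => i _.
by rewrite evPl; ring.
Qed.

Lemma wedge1Zr x c (f : F) vs :
  wedge1 x (fun ws => c * f ws) vs = c * wedge1 x f vs.
Proof.
by rewrite /wedge1 mulr_sumr; apply: eq_bigr => i _; ring.
Qed.


Lemma wedge1_sum x (I : finType) (P : pred I) (c : I -> R) (G : I -> F) vs :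
  wedge1 x (fun ws => \sum_(i | P i) c i * G i ws) vs =
  \sum_(i | P i) c i * wedge1 x (G i) vs.
Proof.
rewrite /wedge1; under eq_bigr => i _ do rewrite mulr_sumr.
rewrite exchange_big /=; apply: eq_bigr => S _.
by rewrite mulr_sumr; apply: eq_bigr => i _; ring.
Qed.

Lemma wedge1_0r x : wedge1 x (zeroF : F) = zeroF.
Proof.
apply: functional_extensionality => vs; rewrite /wedge1 big1 // => i _.
by rewrite mulr0.
Qed.

Lemma wedge1_0l (f : F) : wedge1 0 f = zeroF.
Proof.
apply: functional_extensionality => vs; rewrite /wedge1 big1 // => i _.
by rewrite ev0l mulr0 mul0r.
Qed.

Lemma wedge1_eq0 x (f : F) vs :
  (forall v, v \in vs -> ev x v = 0) -> wedge1 x f vs = 0.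
Proof.
move=> xvs0; rewrite /wedge1 big1 // => i _.
by rewrite xvs0 ?mulr0 ?mul0r // mem_nth.
Qed.

Lemma wedge1_anticomm a b (f : F) vs :
  wedge1 a (wedge1 b f) vs = - wedge1 b (wedge1 a f) vs.
Proof.
elim: vs f => [|v vs IH] f; first by rewrite !wedge1_nil oppr0.
by rewrite !wedge1_cons !contr_wedge1 !wedge1_linr IH !mulN1r; lra.
Qed.

Lemma wedge1_self a (f : F) vs : wedge1 a (wedge1 a f) vs = 0.
Proof.
elim: vs f => [|v vs IH] f; first by rewrite wedge1_nil.
by rewrite !wedge1_cons !contr_wedge1 !wedge1_linr IH; lra.
Qed.

Lemma wedges_0r xs : wedges xs (zeroF : F) = zeroF.
Proof. by elim: xs => [|x xs IH] //=; rewrite IH wedge1_0r. Qed.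

Lemma wedgesZr xs c (f : F) :
  wedges xs (fun ws => c * f ws) = fun vs => c * wedges xs f vs.
Proof.
elim: xs => [|x xs IH] //=; rewrite IH.
by apply: functional_extensionality => vs; rewrite wedge1Zr.
Qed.

Lemma wedge1_wedges x xs (f : F) vs :
  wedge1 x (wedges xs f) vs = (-1) ^+ size xs * wedges xs (wedge1 x f) vs.
Proof.
elim: xs vs => [|y xs IH] vs /=; first by rewrite expr0 mul1r.
rewrite wedge1_anticomm.
have -> : wedge1 x (wedges xs f) =
          fun ws => (-1) ^+ size xs * wedges xs (wedge1 x f) ws.
  by apply: functional_extensionality => ws; rewrite IH.
by rewrite wedge1Zr exprS mulN1r mulNr.
Qed.

Lemma wedge1_wedges_mem x xs (f : F) : x \in xs -> wedge1 x (wedges xs f) = zeroF.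
Proof.
elim: xs => [|y xs IH] //; rewrite inE => /orP [/eqP ->|xxs] /=;
  apply: functional_extensionality => vs; first by rewrite wedge1_self.
by rewrite wedge1_anticomm IH // wedge1_0r oppr0.
Qed.

Lemma wedge1_contr_eq y w (f : F) : ev y w = 1 -> wedge1 y f = zeroF ->
  f = wedge1 y (contr w f).
Proof.
move=> yw1 yf0; apply: functional_extensionality => vs.
have := wedge1_cons y f w vs; rewrite yf0 yw1 mul1r /zeroF => /eqP.
by rewrite eq_sym subr_eq0 => /eqP.
Qed.

Lemma wedge1_contr_eq0 y w (f : F) : ev y w = 0 -> wedge1 y f = zeroF ->
  wedge1 y (contr w f) = zeroF.
Proof.
move=> yw0 yf0; apply: functional_extensionality => vs.
have := wedge1_cons y f w vs; rewrite yf0 yw0 mul0r /zeroF sub0r => /eqP.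
by rewrite eq_sym oppr_eq0 => /eqP.
Qed.

Definition dual_on (I : eqType) (l : seq I) (y w : I -> V) :=
  forall i j, i \in l -> j \in l -> ev (y i) (w j) = (i == j)%:R.

Lemma dual_on_behead (I : eqType) (i : I) l (y w : I -> V) :
  dual_on (i :: l) y w -> dual_on l y w.
Proof. by move=> yw j k jl kl; apply: yw; rewrite inE ?jl ?kl orbT. Qed.

Lemma dual_on_head (I : eqType) (i : I) l (y w : I -> V) j :
  i \notin l -> dual_on (i :: l) y w -> j \in l ->
  ev (y i) (w j) = 0 /\ ev (y j) (w i) = 0.
Proof.
move=> il yw jl; have ji : (j == i) = false by apply: contraNF il => /eqP <-.
by rewrite !yw ?inE ?eqxx ?jl ?orbT // ji eq_sym ji.
Qed.

Lemma wedges_contrs_eq (I : eqType) (l : seq I) (y w : I -> V) (f : F) :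
  uniq l -> dual_on l y w -> (forall i, i \in l -> wedge1 (y i) f = zeroF) ->
  f = wedges (map y l) (contrs (map w l) f).
Proof.
elim: l f => [|i l IH] f /=; first by move=> *; apply: functional_extensionality.
move=> /andP [il ul] yw yf0.
rewrite {1}(@wedge1_contr_eq (y i) (w i) f) ?yw ?yf0 ?inE ?eqxx //.
congr wedge1; apply: IH => [//||j jl]; first exact: dual_on_behead yw.
have [_ yjwi] := dual_on_head il yw jl.
by apply: wedge1_contr_eq0 => //; apply: yf0; rewrite inE jl orbT.
Qed.

Lemma wedges_dual_on (I : eqType) (l : seq I) (y w : I -> V) :
  uniq l -> dual_on l y w -> wedges (map y l) form1 (map w l) = 1.
Proof.
elim: l => [|i l IH] //= /andP [il ul] yw.
rewrite wedge1_cons yw ?inE ?eqxx // mul1r wedge1_eq0 ?subr0.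
  exact: IH (dual_on_behead yw).
by move=> u /mapP [j jl ->]; have [] := dual_on_head il yw jl.
Qed.

Lemma size_take_drop (T : Type) i (us : seq T) : (i < size us)%N ->
  size (take i us ++ drop i.+1 us) = (size us).-1.
Proof. by move=> ltius; rewrite size_cat size_take size_drop ltius; lia. Qed.

Lemma wedges_cat (ys : seq V) (z : F) us vs :
  (forall y v, y \in ys -> v \in vs -> ev y v = 0) -> size us = size ys ->
  wedges ys z (us ++ vs) = wedges ys form1 us * z vs.
Proof.
elim: ys us => [|y ys IH] us ysvs0 /=; first by case: us => //= _; rewrite mul1r.
move=> szus; rewrite /wedge1 size_cat big_split_ord /= [X in _ + X]big1 ?addr0.
  rewrite mulr_suml; apply: eq_bigr => i _.
  have ltius : (i < size us)%N by [].
  have -> : drop i.+1 (us ++ vs) = drop i.+1 us ++ vs.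
    rewrite drop_cat; case: ltnP => // leusi.
    have -> : i.+1 = size us by lia.
    by rewrite subnn drop0 drop_size.
  rewrite nth_cat ltius take_cat ltius.
  rewrite catA IH ?mulrA ?size_take_drop ?szus //.
  by move=> a b ays bvs; apply: ysvs0; rewrite ?inE ?ays ?orbT.
move=> j _; rewrite nth_cat ltnNge leq_addr /= addKn.
by rewrite ysvs0 ?mulr0 ?mul0r ?inE ?eqxx // mem_nth.
Qed.

(** * Alternating forms *)

(* A slotwise form of [is_pform]: after any prefix, linear in the next slot and
   alternating in the next two; unlike [is_pform] it is visibly stable under
   [contr] and [wedge1]. *)
Definition lin_head (g : F) := forall a u w vs,
  g ((a *: u + w) :: vs) = a * g (u :: vs) + g (w :: vs).
Definition alt_head (g : F) := forall u vs, g (u :: u :: vs) = 0.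
Definition alt_form (q : nat) (f : F) :=
  (forall vs, size vs != q -> f vs = 0) /\
  (forall pre, lin_head (contrs pre f) /\ alt_head (contrs pre f)).

Lemma set_nth_cat (pre vs : seq V) i (y : V) :
  set_nth 0 (pre ++ vs) (size pre + i) y = pre ++ set_nth 0 vs i y.
Proof. by elim: pre => //= a pre ->. Qed.

Lemma nth_cat_size (pre vs : seq V) i : nth 0 (pre ++ vs) (size pre + i) = nth 0 vs i.
Proof. by rewrite nth_cat ltnNge leq_addr /= addKn. Qed.

Lemma is_pform_alt_form q (f : F) : is_pform q f -> alt_form q f.
Proof.
case=> fsz flin falt; split=> // pre; split=> [a u w vs|u vs]; rewrite /contrs.
  have := flin (pre ++ u :: vs) (size pre + 0)%N a u w.
  by rewrite size_cat ltn_add2l !set_nth_cat => ->.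
apply: (falt _ (size pre + 0)%N (size pre + 1)%N); rewrite ?ltn_add2l //.
  by rewrite size_cat ltn_add2l.
by rewrite !nth_cat_size.
Qed.

Lemma is_pform_contrs p ws (f : F) : is_pform p f -> (size ws <= p)%N ->
  is_pform (p - size ws) (contrs ws f).
Proof.
move=> [fsz flin falt] wsp; split; rewrite /contrs.
- move=> vs szvs; apply: fsz; rewrite size_cat.
  by apply: contra szvs => /eqP <-; rewrite addKn.
- move=> vs i a u w ltivs; rewrite -!set_nth_cat; apply: flin.
  by rewrite size_cat ltn_add2l.
- move=> vs i j ltij ltjvs e; apply: (falt _ (size ws + i) (size ws + j)).
  + by rewrite ltn_add2l.
  + by rewrite size_cat ltn_add2l.
  + by rewrite !nth_cat_size.
Qed.

Lemma alt_form_lin q a b (f g : F) : alt_form q f -> alt_form q g ->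
  alt_form q (fun vs => a * f vs + b * g vs).
Proof.
move=> [fsz fpre] [gsz gpre]; split=> [vs szvs|pre].
  by rewrite fsz // gsz // !mulr0 addr0.
have [flin falt] := fpre pre; have [glin galt] := gpre pre.
split=> [c u w vs|u vs]; rewrite /contrs /=.
  by move: (flin c u w vs) (glin c u w vs); rewrite /contrs => -> ->; ring.
by move: (falt u vs) (galt u vs); rewrite /contrs => -> ->; rewrite !mulr0 addr0.
Qed.

Lemma alt_form_contr q v (f : F) : alt_form q f -> alt_form q.-1 (contr v f).
Proof.
move=> [fsz fpre]; split=> [vs szvs|pre]; last exact: (fpre (v :: pre)).
by rewrite /contr fsz //=; move: szvs; case: (q).
Qed.

Lemma alt_form_contrs q ws (f : F) : alt_form q f -> alt_form (q - size ws) (contrs ws f).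
Proof.
elim: ws q f => [|w ws IH] q f fq.
  by rewrite subn0; case: fq => fsz fpre; split.
have := IH q.-1 (contr w f) (alt_form_contr w fq).
by rewrite /= subnS -subn1 subnAC subn1.
Qed.

Lemma lin_head_eq0 (g : F) vs : lin_head g -> g (0 :: vs) = 0.
Proof. by move=> glin; have := glin 1 0 0 vs; rewrite scaler0 add0r mul1r; lra. Qed.

Lemma lin_head_sum (g : F) (I : finType) (P : pred I) (c : I -> R) (x : I -> V) vs :
  lin_head g -> g ((\sum_(i | P i) c i *: x i) :: vs) = \sum_(i | P i) c i * g (x i :: vs).
Proof.
move=> glin; apply: (big_rec2 (fun a b => g (a :: vs) = b)); first exact: lin_head_eq0.
by move=> i a b _ <-; rewrite glin.
Qed.

Lemma alt_form_lin_head q (f : F) : alt_form q f -> lin_head f.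
Proof. by case=> _ /(_ [::]) []. Qed.

Lemma alt_form_wedge1 q x (f : F) : alt_form q f -> alt_form q.+1 (wedge1 x f).
Proof.
move=> fq; split.
  move: fq => [fsz _] vs szvs; rewrite /wedge1 big1 // => i _.
  rewrite fsz ?mulr0 // size_take_drop //.
  by apply: contra szvs => /eqP <-; rewrite prednK // (leq_ltn_trans _ (ltn_ord i)).
move=> pre; elim: pre q f fq => [|v pre IH] q f fq.
  have flin := alt_form_lin_head fq; have [_ /(_ [::]) [_ falt]] := fq.
  split=> [a u w vs|u vs]; rewrite /contrs /= !wedge1_cons.
    have -> : contr (a *: u + w) f = fun ws => a * contr u f ws + 1 * contr w f ws.
      by apply: functional_extensionality => ws; rewrite /contr mul1r flin.
    by rewrite wedge1_linr evPr; ring.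
  have -> : contr u (contr u f) = zeroF by apply: functional_extensionality => ws; apply: falt.
  by rewrite wedge1_0r /zeroF /contr; ring.
have -> : contrs (v :: pre) (wedge1 x f) =
    fun ws => ev x v * contrs pre f ws + (-1) * contrs pre (wedge1 x (contr v f)) ws.
  by apply: functional_extensionality => ws; rewrite /contrs /= wedge1_cons; ring.
have [_ /(_ pre) [flin falt]] := fq.
have [glin galt] := IH _ _ (alt_form_contr v fq).
split=> [c u w vs|u vs] /=.
  by rewrite flin glin; ring.
by rewrite falt galt; ring.
Qed.

Lemma alt_form_swap q (f : F) pre a b vs : alt_form q f ->
  f (pre ++ a :: b :: vs) = - f (pre ++ b :: a :: vs).
Proof.
move=> [_ fpre]; have [lin alt] := fpre pre.
have [lin_a _] := fpre (rcons pre a); have [lin_b _] := fpre (rcons pre b).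
move: (alt (a + b) vs) (lin 1 a b ((a + b) :: vs)) (lin_a 1 a b vs) (lin_b 1 a b vs)
  (alt a vs) (alt b vs).
by rewrite /contrs -!cats1 -!catA /= !scale1r !mul1r; lra.
Qed.

Lemma alt_form_repeat q (f : F) pre u mid post : alt_form q f ->
  f (pre ++ u :: mid ++ u :: post) = 0.
Proof.
move=> fq; elim: mid pre => [|m mid IH] pre /=.
  by case: fq => _ /(_ pre) [_ /(_ u post)].
rewrite (alt_form_swap _ _ _ _ fq).
by have := IH (rcons pre m); rewrite -cats1 -catA /= => ->; rewrite oppr0.
Qed.

Lemma alt_form_mem q (f : F) pre u vs : alt_form q f -> u \in pre ->
  f (pre ++ u :: vs) = 0.
Proof.
by move=> fq /splitPr [p1 p2]; rewrite -catA /=; apply: alt_form_repeat fq.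
Qed.

(** * Dual families *)

Definition dual_rows k (Y W : 'M[R]_(k, n)) :=
  forall i j, ev (row i Y) (row j W) = (i == j)%:R.

Lemma row_free_dual k (Y : 'M[R]_(k, n)) : row_free Y -> exists W, dual_rows Y W.
Proof. by case/row_freeP => B YB1; exists B^T => i j; rewrite ev_row_mul YB1 mxE. Qed.

Lemma dual_rows_invmx (X : 'M[R]_n) : X \in unitmx -> dual_rows X (invmx X)^T.
Proof. by move=> uX i j; rewrite ev_row_mul mulmxV // mxE. Qed.

Lemma dual_rows_expand (X : 'M[R]_n) (v : V) : X \in unitmx ->
  v = \sum_j ev (row j X) v *: row j (invmx X)^T.
Proof.
move=> uX; rewrite -[RHS]/(\sum_j _) (eq_bigr (fun j => (v *m X^T) 0 j *: row j (invmx X)^T)).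
  by rewrite -mulmx_sum_row -mulmxA -trmx_mul mulVmx // trmx1 mulmx1.
by move=> j _; rewrite mul_tr_ev.
Qed.

Lemma sum_mul_delta k (c : 'I_k -> R) j : \sum_i c i * (i == j)%:R = c j.
Proof.
rewrite (bigD1 j) //= eqxx mulr1 big1 ?addr0 // => i /negPf ->.
by rewrite mulr0.
Qed.

Lemma ev_mul_dual_rows k (Y W : 'M[R]_(k, n)) (a : 'rV[R]_k) j : dual_rows Y W ->
  ev (a *m Y) (row j W) = a 0 j.
Proof.
move=> YW; rewrite mulmx_sum_row ev_suml.
by under eq_bigr => i _ do rewrite YW; rewrite sum_mul_delta.
Qed.

Lemma wedges_contrs_rows k (Y W : 'M[R]_(k, n)) (f : F) : dual_rows Y W ->
  (forall i, wedge1 (row i Y) f = zeroF) -> f = wedges (rows Y) (contrs (rows W) f).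
Proof.
move=> YW Yf0; apply: (wedges_contrs_eq (enum_uniq _) _ (fun i _ => Yf0 i)).
by move=> i j _ _; apply: YW.
Qed.

Lemma wedges_rows_cat k (Y W : 'M[R]_(k, n)) (z : F) vs : dual_rows Y W ->
  (forall v, v \in vs -> forall i, ev (row i Y) v = 0) ->
  wedges (rows Y) z (rows W ++ vs) = z vs.
Proof.
move=> YW Yvs0; rewrite wedges_cat ?(wedges_dual_on (enum_uniq _)) ?mul1r ?size_map //.
by move=> y v /mapP [i _ ->] vvs; apply: Yvs0.
Qed.

(* Since the rows of [W] span a complement of the common kernel [D] of the
   rows of [Y], splitting off the [W]-component of the first argument reduces
   to a form of lower degree. *)
Lemma alt_form_eq0_dual k (Y W : 'M[R]_(k, n)) q (f : F) : dual_rows Y W ->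
  alt_form q f -> (forall i vs, f (row i W :: vs) = 0) ->
  (forall vs : seq V, (forall v, v \in vs -> forall i, ev (row i Y) v = 0) -> f vs = 0) ->
  f = zeroF.
Proof.
move=> YW fq fW0 fD0; apply: functional_extensionality => vs.
elim: vs q f fq fW0 fD0 => [|v vs IH] q f fq fW0 fD0; first exact: fD0.
pose S := \sum_i ev (row i Y) v *: row i W.
have Yd0 j : ev (row j Y) (v - S) = 0.
  rewrite -scaleN1r addrC evPr /S ev_sumr.
  under eq_bigr => i _ do rewrite YW eq_sym.
  by rewrite sum_mul_delta; lra.
have -> : v = 1 *: S + (v - S) by rewrite scale1r addrC subrK.
have flin := alt_form_lin_head fq.
rewrite flin /S lin_head_sum //.
rewrite big1 ?mulr0 ?add0r => [|i _]; last by rewrite fW0 mulr0.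
apply: (IH q.-1 (contr (v - S) f) (alt_form_contr _ fq)).
  move=> i ws; rewrite /contr -[_ :: _]/([::] ++ _) (alt_form_swap _ _ _ _ fq).
  by rewrite /= fW0 oppr0.
move=> ws Yws0; apply: fD0 => u; rewrite inE => /orP [/eqP ->|uws] //.
exact: Yws0.
Qed.

(** * Polar bases of the divisibility space *)

Lemma polar_basis_annihilates (mu : F) k (Y : 'M[R]_(k, n)) :
  polar_basis mu Y -> forall i, wedge1 (row i Y) mu = zeroF.
Proof. by move=> [_ Ymu] i; apply/Ymu; exact: row_sub. Qed.

Lemma polar_basis_inD (mu : F) k (Y : 'M[R]_(k, n)) v : polar_basis mu Y ->
  inD mu v <-> forall i, ev (row i Y) v = 0.
Proof.
move=> Ymu; split=> [Dv i|Yv0 xi /(proj2 Ymu)]; last exact: ev_submx_eq0.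
by apply: Dv; apply: polar_basis_annihilates.
Qed.

Lemma annihilator_rowspace (mu : F) :
  exists A : 'M[R]_n, forall xi, wedge1 xi mu = zeroF <-> (xi <= A)%MS.
Proof.
apply: subspace_rowspace; first exact: wedge1_0l.
move=> a x y xmu0 ymu0; apply: functional_extensionality => vs.
by rewrite wedge1_linl xmu0 ymu0 /zeroF mulr0 addr0.
Qed.

(* [D] is the kernel of the transposed annihilator matrix, so its polar has
   dimension [n - \rank D]. *)
Lemma polar_basis_exists (mu : F) (Dm : 'M[R]_n) :
  (forall v : V, (v <= Dm)%MS <-> inD mu v) ->
  exists Y : 'M[R]_(n - \rank Dm, n), polar_basis mu Y.
Proof.
move=> Dmu; have [A Amu] := annihilator_rowspace mu.
have DK (v : V) : (v <= Dm)%MS = (v <= kermx A^T)%MS.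
  rewrite sub_kermx; apply/idP/eqP => [/(Dmu v).1 Dv|vA0].
    by apply/rowP => j; rewrite mul_tr_ev mxE; apply: Dv; apply/Amu/row_sub.
  apply/(Dmu v).2 => xi /Amu; apply: ev_submx_eq0 => j.
  by move/rowP: vA0 => /(_ j); rewrite mul_tr_ev mxE.
have -> : \rank Dm = (n - \rank A)%N.
  rewrite -(mxrank_tr A) -mxrank_ker; apply/eqP; rewrite eqn_leq !mxrankS //.
    by apply/row_subP => i; rewrite DK row_sub.
  by apply/row_subP => i; rewrite -DK row_sub.
rewrite subKn ?rank_leq_col //; exists (row_base A); split; first exact: row_base_free.
by move=> xi; rewrite eq_row_base; apply: Amu.
Qed.

Definition seq_span (xs : seq V) : 'M[R]_n := foldr (fun x A => (x + A)%MS) 0 xs.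

Lemma seq_span_sub m xs (B : 'M[R]_(m, n)) :
  (forall x, x \in xs -> (x <= B)%MS) -> (seq_span xs <= B)%MS.
Proof.
elim: xs => [|x xs IH] xsB /=; first exact: sub0mx.
rewrite addsmx_sub xsB ?mem_head // IH // => y yxs.
by apply: xsB; rewrite inE yxs orbT.
Qed.

Lemma wedge1_seq_span xs l y (f : F) : (y <= seq_span l)%MS ->
  (forall x, x \in l -> wedge1 x (wedges xs f) = zeroF) ->
  wedge1 y (wedges xs f) = zeroF.
Proof.
elim: l y => [|x l IH] y /=; first by rewrite submx0 => /eqP -> _; apply: wedge1_0l.
move=> /sub_addsmxP [u ->] lf0; rewrite [u.1]mx11_scalar mul_scalar_mx.
apply: functional_extensionality => vs; rewrite wedge1_linl lf0 ?mem_head //.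
by rewrite IH ?submxMl // => [|z zl]; [rewrite /zeroF mulr0 addr0|apply: lf0; rewrite inE zl orbT].
Qed.

Lemma wedges_neq0_rank xs (f : F) :
  wedges xs f <> zeroF -> (size xs <= \rank (seq_span xs))%N.
Proof.
elim: xs => [|x xs IH] //= xsf_neq0.
have xsf'_neq0 : wedges xs f <> zeroF.
  by move=> xsf0; apply: xsf_neq0; rewrite xsf0 wedge1_0r.
have xNspan : ~~ (x <= seq_span xs)%MS.
  apply/negP => /wedge1_seq_span xsf0; apply/xsf_neq0/xsf0 => y yxs.
  exact: wedge1_wedges_mem.
have ltspan : (seq_span xs < x + seq_span xs)%MS.
  by rewrite ltmxE addsmxSr; apply: contra xNspan; apply: submx_trans (addsmxSl _ _).
by have := rank_ltmx ltspan; have := IH xsf'_neq0; lia.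
Qed.

Lemma annihilated_alt_form_eq0 k (Y W : 'M[R]_(k, n)) q (g : F) : dual_rows Y W ->
  alt_form q g -> (forall i, wedge1 (row i Y) g = zeroF) ->
  (forall vs : seq V, (forall v, v \in vs -> forall i, ev (row i Y) v = 0) ->
     g (rows W ++ vs) = 0) ->
  g = zeroF.
Proof.
move=> YW gq Yg0 gD0; rewrite (wedges_contrs_rows YW Yg0).
suff -> : contrs (rows W) g = zeroF by apply: wedges_0r.
apply: (alt_form_eq0_dual YW (alt_form_contrs _ gq)) => [i vs|//].
by apply: alt_form_mem gq _; apply: map_f; rewrite mem_enum.
Qed.

Section PolarBasis.
Variables (p k : nat) (mu : F) (Y W : 'M[R]_(k, n)).
Hypotheses (mup : alt_form p mu) (mu_neq0 : mu <> zeroF).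
Hypotheses (Ymu : polar_basis mu Y) (YW : dual_rows Y W).

Let mu_div : mu = wedges (rows Y) (contrs (rows W) mu).
Proof. exact: wedges_contrs_rows YW (polar_basis_annihilates Ymu). Qed.

Let zeta_form : alt_form (p - k) (contrs (rows W) mu).
Proof. by have := alt_form_contrs (rows W) mup; rewrite size_map size_enum_ord. Qed.

Let zeta_rowW i vs : contrs (rows W) mu (row i W :: vs) = 0.
Proof. by apply: alt_form_mem mup _; apply: map_f; rewrite mem_enum. Qed.

Lemma polar_basis_size_le : (k <= p)%N.
Proof.
rewrite leqNgt; apply/negP => ltpk; apply: mu_neq0; rewrite mu_div.
suff -> : contrs (rows W) mu = zeroF by apply: wedges_0r.
apply: functional_extensionality => vs; case: mup => musz _; apply: musz.
by rewrite size_cat size_map size_enum_ord; lia.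
Qed.

(* Were [zeta] a 1-form, it would be a covector annihilating [mu] whose
   coordinates on [Y] are its values on the rows of [W], all zero. *)
Lemma polar_basis_size_neq_pred : k.+1 != p.
Proof.
apply/eqP => pk; pose zeta := contrs (rows W) mu.
have zeta1 : alt_form 1 zeta by rewrite -[1%N](subSnn k) pk; apply: zeta_form.
have [zsz _] := zeta1; have zlin := alt_form_lin_head zeta1.
pose eta : V := \row_j zeta [:: delta_mx 0 j].
have zeta_eta : zeta = wedge1 eta form1.
  have form1_contr v : contr v (form1 : F) = zeroF by apply: functional_extensionality.
  apply: functional_extensionality => -[|v vs]; first by rewrite wedge1_nil zsz.
  rewrite wedge1_cons form1_contr wedge1_0r /zeroF subr0.
  case: vs => [|v' vs]; last by rewrite zsz /= ?mulr0.
  rewrite /= mulr1 {1}(row_sum_delta v) lin_head_sum // /ev.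
  by apply: eq_bigr => j _; rewrite mxE mulrC.
have eta_mu0 : wedge1 eta mu = zeroF.
  apply: functional_extensionality => vs; rewrite mu_div wedge1_wedges.
  have -> : wedge1 eta zeta = zeroF.
    by apply: functional_extensionality => ws; rewrite zeta_eta wedge1_self.
  by rewrite wedges_0r /zeroF mulr0.
have /submxP [a eta_a] := (proj2 Ymu eta).1 eta_mu0.
have a0 : a = 0.
  apply/rowP => j; rewrite mxE -(ev_mul_dual_rows a j YW) -eta_a.
  have := zeta_rowW j [::].
  by rewrite -/zeta zeta_eta wedge1_cons wedge1_nil /= mulr1 subr0.
apply: mu_neq0; rewrite mu_div -/zeta zeta_eta eta_a a0 mul0mx wedge1_0l.
exact: wedges_0r.
Qed.

Lemma polar_basis_size_eq : k = p <-> decomposable p mu.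
Proof.
split=> [kp|[c [xs [szxs mu_xs]]]].
  have pk0 : (p - k = 0)%N by rewrite kp subnn.
  have [zsz _] : alt_form 0 (contrs (rows W) mu) by rewrite -pk0.
  exists (contrs (rows W) mu [::]), (rows Y).
  split; first by rewrite size_map size_enum_ord.
  rewrite {1}mu_div -wedgesZr; congr wedges.
  by apply: functional_extensionality => -[|v vs]; rewrite /= ?mulr1 // mulr0 zsz.
apply/eqP; rewrite eqn_leq polar_basis_size_le /=.
have xs_neq0 : wedges xs form1 <> zeroF.
  move=> xs0; apply: mu_neq0; rewrite mu_xs xs0.
  by apply: functional_extensionality => vs; rewrite /zeroF mulr0.
rewrite -szxs -(eqP (proj1 Ymu)); apply: leq_trans (wedges_neq0_rank xs_neq0) _.
apply/mxrankS/seq_span_sub => x xxs; apply/(proj2 Ymu).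
apply: functional_extensionality => vs.
by rewrite mu_xs wedge1Zr wedge1_wedges_mem // /zeroF mulr0.
Qed.

Let inD_ker (vs : seq V) : (forall v, v \in vs -> inD mu v) ->
  forall v, v \in vs -> forall i, ev (row i Y) v = 0.
Proof. by move=> Dvs v /Dvs /(polar_basis_inD v Ymu). Qed.

Lemma polar_factor_unique (Y' : 'M[R]_(k, n)) (z z' : F) : polar_basis mu Y' ->
  mu = wedges (rows Y) z -> mu = wedges (rows Y') z' ->
  exists c : R, c != 0 /\
    forall vs : seq V, (forall v, v \in vs -> inD mu v) -> z vs = c * z' vs.
Proof.
move=> Y'mu mu_z mu_z'; pose c := wedges (rows Y') form1 (rows W).
have zz' vs : (forall v, v \in vs -> inD mu v) -> z vs = c * z' vs.
  move=> Dvs; rewrite -(wedges_rows_cat z YW (inD_ker Dvs)) -mu_z {1}mu_z'.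
  rewrite wedges_cat ?size_map // => y v /mapP [i _ ->] /Dvs.
  by move/(polar_basis_inD v Y'mu).
exists c; split=> //; apply/eqP => c0; apply: mu_neq0.
apply: (annihilated_alt_form_eq0 YW mup (polar_basis_annihilates Ymu)) => vs Yvs0.
have Dvs v : v \in vs -> inD mu v by move=> /Yvs0 /(polar_basis_inD v Ymu).
by rewrite {1}mu_z (wedges_rows_cat z YW Yvs0) zz' // c0 mul0r.
Qed.

Lemma polar_factor_indivisible (z : F) : mu = wedges (rows Y) z ->
  forall xi, (exists v, inD mu v /\ ev xi v != 0) ->
  exists vs : seq V, (forall v, v \in vs -> inD mu v) /\ wedge1 xi z vs != 0.
Proof.
move=> mu_z xi [v [Dv xiv]]; apply: NNPP => zD0.
suff /Dv xiv0 : wedge1 xi mu = zeroF by rewrite xiv0 eqxx in xiv.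
apply: (annihilated_alt_form_eq0 YW (alt_form_wedge1 xi mup)) => [i|vs Yvs0].
  apply: functional_extensionality => vs.
  by rewrite wedge1_anticomm (polar_basis_annihilates Ymu) wedge1_0r /zeroF oppr0.
rewrite {1}mu_z wedge1_wedges (wedges_rows_cat _ YW Yvs0).
have [->|xiz] := eqVneq (wedge1 xi z vs) 0; first by rewrite mulr0.
case: zD0; exists vs; split=> // u /Yvs0 Yu0.
exact/(polar_basis_inD u Ymu).
Qed.

End PolarBasis.

(** * Expansion in a dual basis *)

Section Expansion.
Variable X : 'M[R]_n.
Hypothesis uX : X \in unitmx.
Local Notation E j := (row j (invmx X)^T).

Definition wedge_rows (S : {set 'I_n}) : F :=
  wedges [seq row i X | i <- enum S] form1.

Definition in_span (Q : pred {set 'I_n}) (f : F) := exists c : {set 'I_n} -> R,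
  f = fun vs => \sum_(S | Q S) c S * wedge_rows S vs.

Definition avoiding q (J : {set 'I_n}) : pred {set 'I_n} :=
  fun S => (#|S| == q) && [forall i in S, i \notin J].

Lemma in_span0 Q : in_span Q zeroF.
Proof.
exists (fun _ => 0); apply: functional_extensionality => vs.
by rewrite big1 // => S _; rewrite mul0r.
Qed.

Lemma in_span_wedge_rows (Q : pred {set 'I_n}) S0 : Q S0 -> in_span Q (wedge_rows S0).
Proof.
move=> QS0; exists (fun S => (S == S0)%:R); apply: functional_extensionality => vs.
rewrite (bigD1 S0) //= eqxx mul1r big1 ?addr0 // => S /andP [_ /negPf ->].
by rewrite mul0r.
Qed.

Lemma in_span_lin Q a b (f g : F) : in_span Q f -> in_span Q g ->
  in_span Q (fun vs => a * f vs + b * g vs).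
Proof.
move=> [c ->] [d ->]; exists (fun S => a * c S + b * d S).
apply: functional_extensionality => vs.
by rewrite !mulr_sumr -big_split /=; apply: eq_bigr => S _; ring.
Qed.

Lemma in_span_ext Q (f g : F) : (forall vs, f vs = g vs) -> in_span Q f -> in_span Q g.
Proof. by move=> fg; have -> : f = g by apply: functional_extensionality. Qed.

Lemma in_span_sum Q (I : finType) (P : pred I) (c : I -> R) (G : I -> F) :
  (forall i, P i -> in_span Q (G i)) ->
  in_span Q (fun vs => \sum_(i | P i) c i * G i vs).
Proof.
move=> GQ; rewrite /index_enum; elim: (Finite.enum I) => [|i r IH].
  by apply: in_span_ext (in_span0 Q) => vs; rewrite big_nil.
have [Pi|NPi] := boolP (P i); last by apply: in_span_ext IH => vs; rewrite big_cons (negPf NPi).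
apply: (in_span_ext _ (in_span_lin (c i) 1 (GQ i Pi) IH)) => vs.
by rewrite big_cons Pi mul1r.
Qed.

Lemma in_span_sub (Q Q' : pred {set 'I_n}) f : (forall S, Q S -> Q' S) ->
  in_span Q f -> in_span Q' f.
Proof.
move=> QQ' [c ->]; exists (fun S => if Q S then c S else 0).
apply: functional_extensionality => vs.
rewrite (bigID Q Q') /= [X in _ + X]big1 ?addr0 => [|S /andP [_ /negPf ->]]; last first.
  by rewrite mul0r.
rewrite big_mkcond [RHS]big_mkcond; apply: eq_bigr => S _.
by case QS: (Q S); rewrite ?andbT ?andbF ?QQ'.
Qed.

Lemma in_span_deg0 J (f : F) : alt_form 0 f -> in_span (avoiding 0 J) f.
Proof.
move=> [fsz _].
have avoid0 : avoiding 0 J set0.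
  by rewrite /avoiding cards0 eqxx; apply/forall_inP => i; rewrite inE.
have span0 := in_span_wedge_rows avoid0.
apply: (in_span_ext _ (in_span_lin (f [::]) 0 span0 span0)).
move=> [|v vs]; rewrite /wedge_rows enum_set0 /= mul0r addr0 ?mulr1 //.
by rewrite mulr0 fsz.
Qed.

Lemma alt_form_eq0_dual_basis q (f : F) : alt_form q.+1 f ->
  (forall j vs, f (E j :: vs) = 0) -> f = zeroF.
Proof.
move=> fq fE0; have [fsz _] := fq; apply: functional_extensionality => -[|v vs].
  exact: fsz.
have flin := alt_form_lin_head fq.
rewrite (dual_rows_expand v uX) lin_head_sum //.
by rewrite big1 // => j _; rewrite fE0 mulr0.
Qed.

Section Peel.
Variables (q : nat) (J : {set 'I_n}) (j0 : 'I_n) (f : F).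
Hypotheses (fq : alt_form q.+1 f) (fE0 : forall j vs, j \in J -> f (E j :: vs) = 0).

Lemma contr_dual_vanish j vs : j \in j0 |: J -> contr (E j0) f (E j :: vs) = 0.
Proof.
rewrite in_setU1 => /predU1P [->|jJ]; first by case: fq => _ /(_ [::]) [_ /(_ (E j0) vs)].
rewrite /contr -[E j0 :: _]/([::] ++ _) (alt_form_swap _ _ _ _ fq) /=.
by rewrite fE0 ?oppr0.
Qed.

(* [f = row j0 X /\ contr (E j0) f + peel j0 f], where, unlike [f], both
   [contr (E j0) f] and [peel j0 f] vanish when fed [E j0]. *)
Definition peel : F := fun vs => 1 * f vs + (-1) * wedge1 (row j0 X) (contr (E j0) f) vs.

Lemma peel_vanish j vs : j \in j0 |: J -> peel (E j :: vs) = 0.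
Proof.
move=> jJ'; rewrite /peel wedge1_cons.
have -> : contr (E j) (contr (E j0) f) = zeroF.
  by apply: functional_extensionality => ws; apply: contr_dual_vanish.
rewrite wedge1_0r /zeroF subr0 dual_rows_invmx //.
move: jJ'; rewrite in_setU1 => /predU1P [->|jJ]; first by rewrite eqxx /contr /=; ring.
have [->|_] := eqVneq j0 j; first by rewrite /contr /=; ring.
by rewrite fE0 //=; ring.
Qed.

End Peel.

Lemma in_span_wedge1_min q (J : {set 'I_n}) (j0 : 'I_n) (g : F) :
  (forall j, j \notin J -> (j0 <= j)%N) -> j0 \notin J ->
  in_span (avoiding q (j0 |: J)) g -> in_span (avoiding q.+1 J) (wedge1 (row j0 X) g).
Proof.
move=> j0min j0J [c ->].
apply: (in_span_ext _ (in_span_sum (Q := avoiding q.+1 J) c _)) => [vs|S].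
  by rewrite wedge1_sum.
rewrite /avoiding => /andP [/eqP cardS /forall_inP SJ'].
have j0S i : i \in S -> (j0 < i)%N.
  move=> /SJ'; rewrite in_setU1 negb_or => /andP [ij0 iJ].
  by rewrite ltn_neqAle j0min // andbT; apply: contra ij0 => /eqP /val_inj ->.
have -> : wedge1 (row j0 X) (wedge_rows S) = wedge_rows (j0 |: S).
  by rewrite /wedge_rows enum_setU1_min.
apply: in_span_wedge_rows; rewrite /avoiding cardsU1 cardS.
have -> : j0 \notin S by apply/negP => /j0S; rewrite ltnn.
rewrite eqxx; apply/forall_inP => i; rewrite in_setU1 => /predU1P [-> //|/SJ'].
by rewrite in_setU1 negb_or => /andP [].
Qed.

(* Induction on [q + #|~: J|], peeling off the smallest index outside [J]. *)
Lemma in_span_avoiding q (J : {set 'I_n}) (f : F) : alt_form q f ->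
  (forall j vs, j \in J -> f (E j :: vs) = 0) -> in_span (avoiding q J) f.
Proof.
move: {2}(q + #|~: J|)%N (leqnn (q + #|~: J|)) => m.
elim: m q J f => [|m IH] [|q] J f lem fq fE0; try exact: in_span_deg0.
  by move: lem; rewrite addSn.
have [j1 j1J|noJ] := pickP (fun j => j \notin J); last first.
  rewrite (alt_form_eq0_dual_basis fq) => [|j vs]; first exact: in_span0.
  by apply: fE0; move: (noJ j) => /negbFE.
have [j0 j0J j0min] := @arg_minnP _ j1 (fun j => j \notin J) val j1J.
have card_lt : (#|~: (j0 |: J)| < #|~: J|)%N.
  by have := cardsC J; have := cardsC (j0 |: J); rewrite cardsU1 j0J /=; lia.
have lem' : (q + #|~: J| <= m)%N by rewrite -ltnS -addSn.
have gq : alt_form q (contr (E j0) f) := alt_form_contr (E j0) fq.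
have hq : alt_form q.+1 (peel j0 f).
  exact: alt_form_lin fq (alt_form_wedge1 (row j0 X) gq).
have span_g : in_span (avoiding q.+1 J) (wedge1 (row j0 X) (contr (E j0) f)).
  apply: (in_span_wedge1_min j0min j0J); apply: IH (contr_dual_vanish fq fE0) => //.
  by apply: leq_trans lem'; rewrite leq_add2l; exact: ltnW card_lt.
have span_h : in_span (avoiding q.+1 J) (peel j0 f).
  apply: in_span_sub (IH _ _ _ _ hq (peel_vanish fq fE0)) => [S|]; last first.
    by apply: leq_trans lem'; rewrite addSn -addnS leq_add2l; exact: card_lt.
  rewrite /avoiding => /andP [-> /forall_inP SJ]; apply/forall_inP => i /SJ.
  by rewrite in_setU1 negb_or => /andP [].
by apply: in_span_ext (in_span_lin 1 1 span_g span_h) => vs; rewrite /peel; ring.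
Qed.

End Expansion.

Definition leading (s : nat) : seq 'I_n := filter (fun j : 'I_n => (j < s)%N) (enum 'I_n).

Lemma mem_leading s j : (j \in leading s) = (j < s)%N.
Proof. by rewrite mem_filter mem_enum andbT. Qed.

Lemma size_leading s : (s <= n)%N -> size (leading s) = s.
Proof.
move=> sn; have /(congr1 size) : map val (leading s) = iota 0 s.
  by rewrite -(filter_iota_ltn 0 sn) -val_enum_ord filter_map.
by rewrite size_map size_iota.
Qed.

Section LeadingRows.
Variables (X : 'M[R]_n) (s p : nat) (mu : F).
Hypotheses (uX : X \in unitmx) (mup : is_pform p mu) (mu_neq0 : mu <> zeroF).
Hypotheses (sp : (s <= p)%N) (sn : (s <= n)%N).
Hypothesis annihX : forall xi : V, wedge1 xi mu = zeroF <->
  exists a : V, xi = a *m X /\ (forall i : 'I_n, (s <= i)%N -> a 0 i = 0).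
Local Notation E j := (row j (invmx X)^T).
Local Notation zeta := (contrs [seq E j | j <- leading s] mu).

Let dual_leading : dual_on (leading s) (fun i => row i X) (fun j => E j).
Proof. by move=> i j _ _; apply: dual_rows_invmx. Qed.

Let leading_annihilate i : i \in leading s -> wedge1 (row i X) mu = zeroF.
Proof.
rewrite mem_leading => lt_is; apply/annihX; exists (delta_mx 0 i); split=> [|j le_sj].
  exact: rowE.
by rewrite mxE eqxx /=; case: eqP => // ji; move: lt_is; rewrite -ji ltnNge le_sj.
Qed.

Lemma leading_factor_eq : mu = wedges [seq row i X | i <- leading s] zeta.
Proof.
exact: wedges_contrs_eq (filter_uniq _ (enum_uniq _)) dual_leading leading_annihilate.
Qed.

Lemma leading_factor_pform : is_pform (p - s) zeta.
Proof.
have := is_pform_contrs (ws := [seq E j | j <- leading s]) mup.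
by rewrite size_map size_leading //; apply.
Qed.

Let zeta_E (j : 'I_n) vs : (j < s)%N -> zeta (E j :: vs) = 0.
Proof.
move=> lt_js; apply: alt_form_mem (is_pform_alt_form mup) _.
by apply: map_f; rewrite mem_leading.
Qed.

Lemma leading_factor_indivisible : indivisible zeta.
Proof.
move=> xi xi_neq0 xizeta0.
have zeta_neq0 : zeta <> zeroF.
  by move=> zeta0; apply: mu_neq0; rewrite leading_factor_eq zeta0 wedges_0r.
have /annihX [a [xi_a a_s]] : wedge1 xi mu = zeroF.
  apply: functional_extensionality => vs.
  by rewrite {1}leading_factor_eq wedge1_wedges xizeta0 wedges_0r /zeroF mulr0.
suff a0 : a = 0 by move: xi_neq0; rewrite xi_a a0 mul0mx eqxx.
apply/rowP => j; rewrite mxE; case: (ltnP j s) => [lt_js|]; last exact: a_s.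
apply/eqP/negPn/negP => aj_neq0; apply: zeta_neq0.
apply: functional_extensionality => vs; apply/eqP.
have := wedge1_cons xi zeta (E j) vs; rewrite xizeta0 /zeroF.
have -> : contr (E j) zeta = zeroF.
  by apply: functional_extensionality => ws; rewrite /contr zeta_E.
rewrite wedge1_0r /zeroF subr0 xi_a (ev_mul_dual_rows _ _ (dual_rows_invmx uX)).
by move/esym/eqP; rewrite mulf_eq0 (negPf aj_neq0).
Qed.

Lemma leading_factor_span : exists c : {set 'I_n} -> R,
  zeta = fun vs => \sum_(S : {set 'I_n} | (#|S| == p - s)%N && [forall i in S, (s <= i)%N])
                     c S * wedge_rows X S vs.
Proof.
have zeta_form : alt_form (p - s)%N zeta.
  have := alt_form_contrs [seq E j | j <- leading s] (is_pform_alt_form mup).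
  by rewrite size_map size_leading.
have [c ->] : in_span X (avoiding (p - s)%N [set i : 'I_n | (i < s)%N]) zeta.
  by apply: in_span_avoiding => // j vs; rewrite inE; apply: zeta_E.
exists c; apply: functional_extensionality => vs; apply: eq_bigl => S.
by congr (_ && _); apply: eq_forallb => i; rewrite inE -leqNgt.
Qed.

End LeadingRows.
End ExteriorForms.

Theorem lemma4p1 (R : realType) (n p : nat) (mu : eform R n) (Dm : 'M[R]_n)
  (hmu : is_pform p mu) (hnz : mu <> zeroF)
  (hD : forall v : 'rV[R]_n, (v <= Dm)%MS <-> inD mu v) :
  let s := (n - \rank Dm)%N in
  [/\ (s.+1 != p) && (s <= p)%N,
      (s = p <-> decomposable p mu),
      (* (b) *)
      (forall X : 'M[R]_n, X \in unitmx ->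
         (forall xi : 'rV[R]_n, wedge1 xi mu = zeroF <->
            exists a : 'rV[R]_n, xi = a *m X /\
              (forall i : 'I_n, (s <= i)%N -> a 0 i = 0)) ->
         exists zeta : eform R n,
           [/\ is_pform (p - s) zeta,
               mu = wedges [seq row i X | i <- filter (fun j : 'I_n => (j < s)%N) (enum 'I_n)] zeta,
               indivisible zeta
             & exists c : {set 'I_n} -> R,
                 zeta = (fun vs => \sum_(S : {set 'I_n} |
                            (#|S| == p - s)%N && [forall i in S, (s <= i)%N])
                          c S * wedges [seq row i X | i <- enum S] form1 vs)]),
      (* (c) *)
      (forall (Y1 Y2 : 'M[R]_(s, n)) (z1 z2 : eform R n),
         polar_basis mu Y1 -> polar_basis mu Y2 ->
         is_pform (p - s) z1 -> is_pform (p - s) z2 ->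
         mu = wedges (rows Y1) z1 -> mu = wedges (rows Y2) z2 ->
         exists c : R, c != 0 /\
           forall vs : seq 'rV[R]_n, (forall v, v \in vs -> inD mu v) ->
             z1 vs = c * z2 vs)
    & (* (d) *)
      (forall (Y : 'M[R]_(s, n)) (z : eform R n),
         polar_basis mu Y -> is_pform (p - s) z -> mu = wedges (rows Y) z ->
         forall xi : 'rV[R]_n, (exists v, inD mu v /\ ev xi v != 0) ->
           exists vs : seq 'rV[R]_n,
             (forall v, v \in vs -> inD mu v) /\ wedge1 xi z vs != 0)].
Proof.
move=> s; have mup := is_pform_alt_form hmu.
have [Y Ymu] := polar_basis_exists hD; have [W YW] := row_free_dual (proj1 Ymu).
have s_le_p := polar_basis_size_le mup hnz Ymu YW.
split.
- by rewrite (polar_basis_size_neq_pred mup hnz Ymu YW).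
- exact: polar_basis_size_eq mup hnz Ymu YW.
- move=> X uX annihX; have sn : (s <= n)%N := leq_subr _ _.
  exists (contrs [seq row j (invmx X)^T | j <- leading n s] mu); split.
  + exact: leading_factor_pform hmu s_le_p sn.
  + exact: leading_factor_eq uX annihX.
  + exact: (leading_factor_indivisible uX hmu hnz annihX).
  + exact: leading_factor_span uX hmu sn.
- move=> Y1 Y2 z1 z2 Y1mu Y2mu _ _ mu_z1 mu_z2.
  have [W1 Y1W1] := row_free_dual (proj1 Y1mu).
  exact: (polar_factor_unique mup hnz Y1mu Y1W1 Y2mu mu_z1 mu_z2).
- move=> Y' z Y'mu _ mu_z; have [W' Y'W'] := row_free_dual (proj1 Y'mu).
  exact: (polar_factor_indivisible mup Y'mu Y'W' mu_z).
Qed.
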